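(* Let $H$ be a binary tree based graph, let $V_1,\dots,V_q$ be pairwise disjoint sets of variables of $\phi_H$, and for each $1\le i\le q$ let ${\bf S}_i$ be a family of guarded sets of literals, each $S\in{\bf S}_i$ having variable set exactly $V_i$. Then $$\Pr\Big(\bigcap_{i=1}^q\bigcup_{S\in{\bf S}_i}{\bf EC}(S)\Big)=\prod_{i=1}^q\Pr\Big(\bigcup_{S\in{\bf S}_i}{\bf EC}(S)\Big).$$
   Context: Sets of literals never contain a variable together with its negation. A rooted tree is extended if none of its leaves has a sibling. A graph $H$ is a binary tree based graph if it is the edge-disjoint union of extended rooted trees $T_1,\dots,T_m$ with roots $t_1,\dots,t_m$ such that every leaf of some $T_i$ is a leaf of exactly two of the trees, and any two trees have at most one common vertex, which is a leaf of both. $T_i,T_j$ are adjacent if they share a leaf $\ell_{i,j}$; $P_{i,j}$ is the path between $t_i$ and $t_j$ in $T_i\cup T_j$. A pseudoedge is a pair $\{t_i,t_j\}$ with $T_i,T_j$ adjacent. $\phi_H$ is the CNF on variables $V(H)$ with a clause $C_{i,j}$ (positive literals of $V(P_{i,j})$) for each pseudoedge; the non-leaf variables of $C_{i,j}$ are its variables other than $\ell_{i,j}$. A set $S$ of literals is guarded from $C_{i,j}$ if (1) $\ell_{i,j}$ does not occur in $S$, or (2) some non-leaf variable of $C_{i,j}$ occurs positively in $S$, or (3) $\ell_{i,j}$ occurs positively in $S$ and all other variables of $C_{i,j}$ occur negatively in $S$; $S$ is guarded if it is guarded from every clause of $\phi_H$. The positive literal $\ell_{i,j}$ is fixed w.r.t.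 $S$ if $\ell_{i,j}\in S$ and all other variables of $C_{i,j}$ occur negatively in $S$; $Fix(S)$ is the set of fixed literals. ${\bf SAT}(H)$ is the set of satisfying assignments of $\phi_H$; each $S'\in{\bf SAT}(H)$ has probability $(1/2)^{|V(H)\setminus Fix(S')|}$. ${\bf EC}(S)=\{S'\in{\bf SAT}(H):S\subseteq S'\}$. *)

From HB Require Import structures.
From mathcomp Require Import all_boot all_order all_algebra.
From mathcomp Require Import boolp.
Set Implicit Arguments. Unset Strict Implicit. Unset Printing Implicit Defensive.
Import Order.TTheory GRing.Theory Num.Theory.

Record treeData (V : finType) := TreeData {
  ntrees : nat;
  tverts : 'I_ntrees -> {set V};
  troot  : 'I_ntrees -> V;
  tpar   : 'I_ntrees -> V -> V }.
Arguments tverts {V} t _.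
Arguments troot {V} t _.
Arguments tpar {V} t _ _.

Section BTBG.
Variables (V : finType) (H : treeData V).

Definition tidx := 'I_(ntrees H).

Definition rooted_tree (A : {set V}) (r : V) (p : V -> V) : Prop :=
  [/\ r \in A,
      (forall v, v \in A -> v != r -> p v \in A) &
      (forall v, v \in A -> exists n, iter n p v = r)].

Definition tedges (i : tidx) : {set {set V}} :=
  [set [set v; tpar H i v] | v in tverts H i :\ troot H i].

Definition children (i : tidx) (v : V) : {set V} :=
  [set u in tverts H i | (u != troot H i) && (tpar H i u == v)].

Definition leaf (i : tidx) (v : V) : bool :=
  (v \in tverts H i) && (children i v == set0).

Definition siblings (i : tidx) (u v : V) : bool :=
  [&& u \in tverts H i, v \in tverts H i, u != troot H i,
      v != troot H i, u != v & tpar H i u == tpar H i v].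

Definition extended (i : tidx) : Prop :=
  forall v u, leaf i v -> ~~ siblings i u v.

Definition is_btbg : Prop :=
  [/\ (forall i, rooted_tree (tverts H i) (troot H i) (tpar H i)),
      (forall i, extended i),
      (forall i j, i != j -> [disjoint tedges i & tedges j]),
      (forall i v, leaf i v -> #|[set j | leaf j v]| = 2) &
      (forall i j, i != j -> forall v w,
          v \in tverts H i :&: tverts H j -> w \in tverts H i :&: tverts H j ->
          v = w /\ leaf i v /\ leaf j v) /\
      (forall v, exists i, v \in tverts H i)].

Definition uadj (i j : tidx) : rel V :=
  fun u w => [set u; w] \in tedges i :|: tedges j.

(* v is a vertex of P_{i,j}, the path between t_i and t_j in T_i \cup T_j *)
Definition pvars (i j : tidx) (v : V) : Prop :=
  exists s : seq V,
    [/\ uniq (troot H i :: s), path (uadj i j) (troot H i) s,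
        last (troot H i) s = troot H j & v \in troot H i :: s].

(* pseudoedge / clause C_{i,j}, with l = l_{i,j} the common leaf *)
Definition clause_at (i j : tidx) (l : V) : Prop :=
  i != j /\ leaf i l /\ leaf j l.

(* literals: pairs (variable, sign); true = positive *)
Definition lit := (V * bool)%type.

Definition consistent (S : {set lit}) : Prop :=
  forall v, ~ ((v, true) \in S /\ (v, false) \in S).

Definition occurs (S : {set lit}) (v : V) : Prop :=
  (v, true) \in S \/ (v, false) \in S.

Definition lvars (S : {set lit}) : {set V} :=
  [set v | ((v, true) \in S) || ((v, false) \in S)].

Definition guarded_from (S : {set lit}) (i j : tidx) (l : V) : Prop :=
  ~ occurs S l
  \/ (exists v, [/\ pvars i j v, v <> l & (v, true) \in S])
  \/ ((l, true) \in S /\ forall v, pvars i j v -> v <> l -> (v, false) \in S).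

Definition guarded (S : {set lit}) : Prop :=
  forall i j l, clause_at i j l -> guarded_from S i j l.

Definition fixedP (S : {set lit}) (l : V) : Prop :=
  exists i j, clause_at i j l /\ (l, true) \in S /\
    forall v, pvars i j v -> v <> l -> (v, false) \in S.

Definition Fix (S : {set lit}) : {set V} := [set v | `[< fixedP S v >]].

(* satisfying assignments of phi_H, as complete consistent literal sets *)
Definition SAT (S : {set lit}) : Prop :=
  [/\ consistent S, (forall v, occurs S v) &
      (forall i j l, clause_at i j l -> exists v, pvars i j v /\ (v, true) \in S)].

Definition EC (S S' : {set lit}) : Prop := SAT S' /\ S \subset S'.

Variable R : realFieldType.
Local Open Scope ring_scope.

Definition prob (S' : {set lit}) : R :=
  (2^-1) ^+ #|[set v | v \notin Fix S']|.

Definition Pr (A : {set lit} -> Prop) : R :=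
  \sum_(S' : {set lit} | `[< SAT S' /\ A S' >]) prob S'.

End BTBG.

(* Call v a leaf variable if it is the common leaf of some clause C_{i,j}.
   Map every assignment w of {0,1}^V to the satisfying assignment [repair w]
   that agrees with w except that a leaf variable l is set to true whenever
   some clause with leaf l has no true non-leaf variable in w.  No non-leaf
   variable of a clause is a leaf variable, so the fibre of [repair] over a
   satisfying S' consists of the assignments agreeing with S' outside Fix S';
   it has 2^|Fix S'| elements, and Pr is the image under [repair] of the
   uniform distribution on {0,1}^V.  For a guarded S, whether S holds in
   [repair w] depends only on the values of w on the variables of S: each
   clause whose leaf occurs in S is decided by the literals of S alone.
   Events depending on disjoint sets of coordinates are independent under
   the uniform distribution. *)

From HB Require Import structures.
From mathcomp Require Import all_boot all_order all_algebra.
From mathcomp Require Import boolp.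
Import Order.TTheory GRing.Theory Num.Theory.
Set Implicit Arguments. Unset Strict Implicit. Unset Printing Implicit Defensive.

Section SimplePaths.
Variables (T : eqType) (e : rel T).

Lemma cons_last_rev_belast (x : T) s : last x s :: rev (belast x s) = rev (x :: s).
Proof. by rewrite [x :: s]lastI rev_rcons. Qed.

Lemma last_rev_belast (x : T) s : last (last x s) (rev (belast x s)) = x.
Proof. by case: s => [|y s] //=; rewrite rev_cons last_rcons. Qed.

Lemma path_neighbour x s u :
  path e x s -> s != [::] -> u \in x :: s -> exists w, e u w || e w u.
Proof.
move=> p_s s0; rewrite inE => /predU1P[->|us].
  by case: s s0 p_s => // y s _ /andP[exy _]; exists y; rewrite exy.
case/splitPr: us p_s => s1 s2; rewrite cat_path /= => /and3P[_ e1 _].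
by exists (last x s1); rewrite e1 orbT.
Qed.

Lemma path_inner_neighbours x s u :
  uniq (x :: s) -> path e x s -> u \in s -> u != last x s ->
  exists w1 w2, [/\ w1 != w2, e w1 u & e u w2].
Proof.
move=> uq p_s us; case/splitPr: us uq p_s => s1 s2.
rewrite last_cat => uq; rewrite cat_path /= => /and3P[_ e1 p2].
case: s2 uq p2 => [|w s2] uq p2; first by rewrite eqxx.
move=> _; exists (last x s1), w; split=> //; last by case/andP: p2.
apply/eqP=> E; move: uq; rewrite -cat_cons cat_uniq => /and3P[_ /hasPn nw _].
by have := nw w; rewrite -E mem_last !inE eqxx orbT => /(_ isT).
Qed.

End SimplePaths.

Lemma card_ffun_agree_off (T : finType) (F : {set T}) (w : {ffun T -> bool}) :
  #|[set w' : {ffun T -> bool} | [forall v, (v \notin F) ==> (w' v == w v)]]| =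
  2 ^ #|F|.
Proof.
pose g (A : {set T}) : {ffun T -> bool} := [ffun v => if v \in F then v \in A else w v].
have g_inj : {in powerset F &, injective g}.
  move=> A B; rewrite !inE => AF BF /ffunP gAB; apply/setP=> v.
  have := gAB v; rewrite !ffunE; case: ifP => [_ -> //|vF _].
  by apply/idP/idP=> h; [rewrite (subsetP AF) in vF | rewrite (subsetP BF) in vF].
rewrite -card_powerset -(card_in_imset g_inj); apply: eq_card => w'; rewrite inE.
apply/forallP/imsetP=> [agree|[A _ ->] v].
  exists [set v in F | w' v].
    by rewrite inE; apply/subsetP=> v; rewrite inE => /andP[].
  apply/ffunP=> v; rewrite !ffunE inE; case vF : (v \in F) => //=.
  by apply/eqP; apply: (implyP (agree v)); rewrite vF.
by apply/implyP=> vF; rewrite ffunE (negbTE vF).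
Qed.

Section UniformMean.
Variables (R : realFieldType) (T : finType).
Local Open Scope ring_scope.
Implicit Types (f g : {ffun T -> bool} -> R) (D : {set T}).

Definition depends_on (X : Type) (f : {ffun T -> bool} -> X) D :=
  forall w1 w2 : {ffun T -> bool}, {in D, w1 =1 w2} -> f w1 = f w2.

Definition uniform_mean f : R := (2^-1) ^+ #|T| * \sum_w f w.

Lemma uniform_weightK : (2^-1) ^+ #|T| * (2 ^ #|T|)%:R = 1 :> R.
Proof. by rewrite natrX -exprMn mulVf ?pnatr_eq0 // expr1n. Qed.

Lemma sum_ffun_cst (c : R) : \sum_(w : {ffun T -> bool}) c = (2 ^ #|T|)%:R * c.
Proof. by rewrite sumr_const card_ffun card_bool mulr_natl. Qed.

Lemma uniform_mean_cst (c : R) : uniform_mean (fun=> c) = c.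
Proof. by rewrite /uniform_mean sum_ffun_cst mulrA uniform_weightK mul1r. Qed.

(* The involution exchanging the D1-coordinates of two independent samples
   turns (sum f) * (sum g) into 2^|T| * sum (f * g). *)
Lemma uniform_meanM f g D1 D2 : [disjoint D1 & D2] ->
  depends_on f D1 -> depends_on g D2 ->
  uniform_mean (fun w => f w * g w) = uniform_mean f * uniform_mean g.
Proof.
move=> D12 fD1 gD2.
pose mix (a b : {ffun T -> bool}) := [ffun v => if v \in D1 then a v else b v].
have f_mix a b : f (mix a b) = f a by apply: fD1 => v vD; rewrite ffunE vD.
have g_mix a b : g (mix a b) = g b.
  by apply: gD2 => v vD; rewrite ffunE (disjointFl D12 vD).
pose swap (p : {ffun T -> bool} * {ffun T -> bool}) := (mix p.1 p.2, mix p.2 p.1).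
have swapK : involutive swap.
  by move=> [a b]; congr pair; apply/ffunP=> v; rewrite !ffunE; case: (v \in D1).
have prod_sum : (\sum_w f w) * (\sum_w g w) =
    \sum_(p : {ffun T -> bool} * {ffun T -> bool}) f (swap p).1 * g (swap p).1.
  rewrite mulr_suml; under eq_bigr do rewrite mulr_sumr.
  by rewrite pair_big; apply: eq_bigr => -[a b] _ /=; rewrite f_mix g_mix.
rewrite /uniform_mean mulrACA prod_sum.
rewrite -(reindex_inj (inv_inj swapK) (F := fun p => f p.1 * g p.1) (P := xpredT)) /=.
rewrite -(pair_big xpredT xpredT (fun a _ => f a * g a)) /=.
rewrite [X in _ = _ * X](eq_bigr (fun a => (2 ^ #|T|)%:R * (f a * g a))); last first.
  by move=> a _; rewrite sum_ffun_cst.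
by rewrite -mulr_sumr -mulrA (mulrA _ (2 ^ #|T|)%:R) uniform_weightK mul1r.
Qed.

Lemma uniform_mean_prod n (f : 'I_n -> {ffun T -> bool} -> R) (D : 'I_n -> {set T}) :
  (forall i k, i != k -> [disjoint D i & D k]) -> (forall i, depends_on (f i) (D i)) ->
  uniform_mean (fun w => \prod_(i < n) f i w) = \prod_(i < n) uniform_mean (f i).
Proof.
elim: n f D => [|n IH] f D D_dis fD.
  by under eq_fun do rewrite big_ord0; rewrite big_ord0 uniform_mean_cst.
under eq_fun do rewrite big_ord_recr /=; rewrite big_ord_recr /=.
rewrite (uniform_meanM (D1 := \bigcup_(i < n) D (widen_ord (leqnSn n) i))
                       (D2 := D ord_max)).
- rewrite (IH _ (fun i => D (widen_ord (leqnSn n) i))) // => i k ik.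
  by apply: D_dis; apply: contra ik => /eqP[/val_inj->].
- rewrite disjoint_sym; apply/bigcup_disjointP=> i _.
  by apply: D_dis; rewrite -val_eqE /= neq_ltn ltn_ord orbT.
- move=> w1 w2 w12; apply: eq_bigr => i _; apply: fD => v vD.
  by apply: w12; apply/bigcupP; exists i.
- exact: fD.
Qed.

Lemma prod_nat_bool n (b : 'I_n -> bool) :
  \prod_(i < n) (b i)%:R = ([forall i, b i])%:R :> R.
Proof.
have [/forallP bT|/forallPn[i nbi]] := boolP [forall i, b i].
  by rewrite big1 // => i _; rewrite bT.
by rewrite (bigD1 i) //= (negbTE nbi) mul0r.
Qed.

End UniformMean.

Section TreeGraph.
Variables (V : finType) (H : treeData V).
Hypothesis HH : is_btbg H.

Lemma tree_rooted (k : tidx H) : rooted_tree (tverts H k) (troot H k) (tpar H k).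
Proof. by case: HH. Qed.

Lemma tree_meet (i j : tidx H) v w : i != j ->
  v \in tverts H i :&: tverts H j -> w \in tverts H i :&: tverts H j ->
  v = w /\ leaf i v /\ leaf j v.
Proof. by case: HH => _ _ _ _ [meet _] ij; apply: meet ij v w. Qed.

Lemma root_in (k : tidx H) : troot H k \in tverts H k.
Proof. by case: (tree_rooted k). Qed.

Lemma leaf_in (k : tidx H) v : leaf k v -> v \in tverts H k.
Proof. by case/andP. Qed.

Lemma leaf_shared (k a : tidx H) u : leaf k u -> u \in tverts H a -> leaf a u.
Proof.
move=> lk ua; have [<- //|ka] := eqVneq k a.
have uka : u \in tverts H k :&: tverts H a by rewrite inE ua leaf_in.
by case: (tree_meet ka uka uka) => _ [].
Qed.

Lemma leaf_edge (i : tidx H) v w :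
  leaf i v -> [set v; w] \in tedges i -> w = tpar H i v /\ v != troot H i.
Proof.
case/andP=> vi /eqP ch0 /imsetP[x]; rewrite !inE => /andP[xr xi] E.
have vE : v \in [set x; tpar H i x] by rewrite -E !inE eqxx.
have wE : w \in [set x; tpar H i x] by rewrite -E !inE eqxx orbT.
rewrite !inE in vE wE; case/orP: vE => [/eqP vx|/eqP vp].
  subst x; split=> //; case/orP: wE => /eqP wE; subst w => //.
  have : tpar H i v \in [set v; v] by rewrite E !inE eqxx orbT.
  by rewrite !inE orbb => /eqP ->.
have : x \in children i v by rewrite inE xi xr -vp eqxx.
by rewrite ch0 inE.
Qed.

Lemma edge_in_tverts (i : tidx H) u w :
  [set u; w] \in tedges i -> (u \in tverts H i) && (w \in tverts H i).
Proof.
have [_ par_in _] := tree_rooted i.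
case/imsetP=> x; rewrite !inE => /andP[xr xi] E.
have uE : u \in [set x; tpar H i x] by rewrite -E !inE eqxx.
have wE : w \in [set x; tpar H i x] by rewrite -E !inE eqxx orbT.
rewrite !inE in uE wE.
by case/orP: uE => /eqP ->; case/orP: wE => /eqP ->; rewrite ?xi ?par_in.
Qed.

Lemma path_to_root (k : tidx H) v : v \in tverts H k ->
  exists s, [/\ path (fun a b => [set a; b] \in tedges k) v s,
    last v s = troot H k & {subset s <= tverts H k}].
Proof.
have [_ par_in reach] := tree_rooted k.
move=> vk; have [n] := reach v vk; elim: n v vk => [|n IH] v vk hn.
  by exists [::].
have [->|vr] := eqVneq v (troot H k); first by exists [::].
rewrite iterSr in hn; have [s [p_s ls sk]] := IH _ (par_in v vk vr) hn.
exists (tpar H k v :: s); split=> //=.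
- by rewrite p_s andbT; apply/imsetP; exists v; rewrite ?inE ?vr.
- by move=> y; rewrite inE => /predU1P[->|/sk//]; apply: par_in.
Qed.

Lemma uadj_sym (i j : tidx H) u w : uadj i j u w = uadj i j w u.
Proof. by rewrite /uadj [[set w; u]]setUC. Qed.

Lemma uadjC (i j : tidx H) u w : uadj i j u w = uadj j i u w.
Proof. by rewrite /uadj [tedges j :|: _]setUC. Qed.

Lemma pvarsC (i j : tidx H) v : pvars i j v -> pvars j i v.
Proof.
case=> s [uq p_s ls vs]; exists (rev (belast (troot H i) s)).
rewrite -ls rev_path cons_last_rev_belast rev_uniq mem_rev last_rev_belast.
by split=> //; apply: sub_path p_s => a b; rewrite uadj_sym uadjC.
Qed.

Lemma pvars_in_tverts (i j : tidx H) v :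
  pvars i j v -> v \in tverts H i :|: tverts H j.
Proof.
case=> s [_ + _]; have : troot H i \in tverts H i :|: tverts H j.
  by rewrite inE root_in.
elim: s (troot H i) => [|y s IH] x xij /=; first by rewrite inE => _ /eqP ->.
case/andP=> exy p_s; rewrite inE => /predU1P[-> //|]; apply: IH p_s.
move: exy; rewrite /uadj inE.
by case/orP=> /edge_in_tverts/andP[_ yk]; rewrite inE yk ?orbT.
Qed.

Lemma pvars_leaf_in_tverts (i j : tidx H) u :
  pvars i j u -> leaf i u -> u \in tverts H j.
Proof.
case=> s [uq p_s ls us] li; apply: contraT => uj.
have nbr w : uadj i j u w || uadj i j w u -> w = tpar H i u /\ u != troot H i.
  rewrite [uadj i j w u]uadj_sym orbb /uadj inE => /orP[/(leaf_edge li) //|].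
  by case/edge_in_tverts/andP=> uj' _; rewrite uj' in uj.
have s0 : s != [::].
  apply: contraNneq uj => s0; move: us ls; rewrite s0 inE => /eqP -> /= ->.
  exact: root_in.
have [w /nbr[_ ur]] := path_neighbour p_s s0 us.
have us' : u \in s by move: us; rewrite inE (negbTE ur).
have ul : u != last (troot H i) s.
  by rewrite ls; apply: contraNneq uj => ->; apply: root_in.
have [w1 [w2 [w12 e1 e2]]] := path_inner_neighbours uq p_s us' ul.
have [E1 _] := nbr w1 (introT orP (or_intror e1)).
have [E2 _] := nbr w2 (introT orP (or_introl e2)).
by rewrite E1 E2 eqxx in w12.
Qed.

Definition clause_leaf (v : V) : bool := `[< exists i j : tidx H, clause_at i j v >].

Lemma pvars_not_clause_leaf (i j : tidx H) l u :
  clause_at i j l -> pvars i j u -> u <> l -> ~~ clause_leaf u.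
Proof.
move=> [ij [li lj]] pu ul; apply/negP => /asboolP[k [_ [_ [lk _]]]].
have lij : l \in tverts H i :&: tverts H j by rewrite inE !leaf_in.
suff uij : u \in tverts H i :&: tverts H j by case: (tree_meet ij uij lij).
have /setUP[ui|uj] := pvars_in_tverts pu.
- by rewrite inE ui (pvars_leaf_in_tverts pu (leaf_shared lk ui)).
- by rewrite inE uj (pvars_leaf_in_tverts (pvarsC pu) (leaf_shared lk uj)).
Qed.

Lemma pvars_clause_leaf (i j : tidx H) l : clause_at i j l -> pvars i j l.
Proof.
move=> [ij [li lj]]; rewrite /pvars.
have tedge_uadj (k : tidx H) : k = i \/ k = j ->
    subrel (fun a b => [set a; b] \in tedges k) (uadj i j).
  by case=> -> a b eab; rewrite /uadj inE eab ?orbT.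
have [si [p_si lsi si_i]] := path_to_root (leaf_in li).
have [sj [p_sj lsj sj_j]] := path_to_root (leaf_in lj).
move: lsi; case/shortenP: (sub_path (tedge_uadj i (or_introl erefl)) p_si).
move=> ti p_ti uq_ti ti_si <-.
move: lsj; case/shortenP: (sub_path (tedge_uadj j (or_intror erefl)) p_sj).
move=> tj p_tj uq_ltj tj_sj ltj.
have /andP[l_tj uq_tj] : (l \notin tj) && uniq tj := uq_ltj.
exists (rev (belast l ti) ++ tj); split.
- rewrite -cat_cons cons_last_rev_belast cat_uniq rev_uniq uq_ti uq_tj andbT /=.
  apply/hasPn=> y y_tj; rewrite mem_rev; apply/negP=> y_ti.
  have yij : y \in tverts H i :&: tverts H j.
    rewrite inE (sj_j _ (tj_sj _ y_tj)) andbT.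
    by move: y_ti; rewrite inE => /predU1P[->|/ti_si/si_i//]; apply: leaf_in.
  have lij : l \in tverts H i :&: tverts H j by rewrite inE !leaf_in.
  by have [yl _] := tree_meet ij yij lij; rewrite -yl y_tj in l_tj.
- rewrite cat_path rev_path last_rev_belast p_tj andbT.
  by apply: sub_path p_ti => a b; rewrite uadj_sym.
- by rewrite last_cat last_rev_belast.
- by rewrite -cat_cons cons_last_rev_belast mem_cat mem_rev mem_head.
Qed.

End TreeGraph.

Section Repair.
Variables (V : finType) (H : treeData V).
Hypothesis HH : is_btbg H.
Implicit Types (w : {ffun V -> bool}) (S : {set lit V}).

Definition lits_of w : {set lit V} := [set x | w x.1 == x.2].

Definition ffun_of_lits S : {ffun V -> bool} := [ffun v => (v, true) \in S].

Lemma in_lits_of w v b : ((v, b) \in lits_of w) = (w v == b).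
Proof. by rewrite inE. Qed.

Lemma lits_ofK : cancel lits_of ffun_of_lits.
Proof. by move=> w; apply/ffunP=> v; rewrite ffunE in_lits_of eqb_id. Qed.

Lemma ffun_of_litsK S : SAT H S -> lits_of (ffun_of_lits S) = S.
Proof.
case=> cS oS _; apply/setP=> -[v [|]]; rewrite in_lits_of ffunE ?eqb_id //.
have := cS v; case: (oS v) => ->; by case: (_ \in S) => // /(_ (conj isT isT)).
Qed.

Lemma SAT_lits_ofP w : SAT H (lits_of w) <->
  (forall (i j : tidx H) l, clause_at i j l -> exists v, pvars i j v /\ w v).
Proof.
split=> [[_ _ C] i j l c|C].
  by have [v [pv]] := C i j l c; rewrite in_lits_of => /eqP; exists v.
split.
- by move=> v []; rewrite !in_lits_of => /eqP -> /eqP.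
- by move=> v; rewrite /occurs !in_lits_of; case: (w v); [left|right].
- by move=> i j l c; have [v [pv wv]] := C i j l c; exists v; rewrite in_lits_of wv.
Qed.

Definition nonleaf_sat w (i j : tidx H) (l : V) : Prop :=
  exists u, [/\ pvars i j u, u <> l & w u].

Definition leaf_free w (l : V) : bool :=
  `[< forall i j : tidx H, clause_at i j l -> nonleaf_sat w i j l >].

Definition repair w : {ffun V -> bool} :=
  [ffun v => if clause_leaf H v then w v || ~~ leaf_free w v else w v].

Lemma leaf_freePn w l :
  ~~ leaf_free w l -> exists i j : tidx H, clause_at i j l /\ ~ nonleaf_sat w i j l.
Proof.
move/asboolPn=> nK; apply: contrapT => nE; apply: nK => i j c.
by apply: contrapT => nX; apply: nE; exists i, j.
Qed.

Lemma not_leaf_free_clause_leaf w l : ~~ leaf_free w l -> clause_leaf H l.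
Proof. by case/leaf_freePn=> i [j [c _]]; apply/asboolP; exists i, j. Qed.

Lemma repair_nonleaf w v : ~~ clause_leaf H v -> repair w v = w v.
Proof. by move=> nl; rewrite ffunE (negbTE nl). Qed.

Lemma eq_leaf_free w1 w2 l :
  (forall v, ~~ clause_leaf H v -> w1 v = w2 v) -> leaf_free w1 l = leaf_free w2 l.
Proof.
move=> eq12; apply: asbool_equiv_eq.
suff sat_eq i j : clause_at i j l -> nonleaf_sat w1 i j l <-> nonleaf_sat w2 i j l.
  by split=> K i j c; apply/(sat_eq i j c); apply: K.
move=> c; split=> -[u [pu ul wu]]; exists u; split=> //;
  have nl := pvars_not_clause_leaf HH c pu ul; by [rewrite -eq12 | rewrite eq12].
Qed.

Lemma SAT_not_leaf_free w l : SAT H (lits_of w) -> ~~ leaf_free w l -> w l.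
Proof.
move=> /SAT_lits_ofP sat /leaf_freePn[i [j [c nX]]]; have [v [pv wv]] := sat i j l c.
have [<- //|vl] := eqVneq v l.
by exfalso; apply: nX; exists v; split=> //; apply/eqP.
Qed.

Lemma SAT_repair w : SAT H (lits_of (repair w)).
Proof.
apply/SAT_lits_ofP => i j l c.
have Ll : clause_leaf H l by apply/asboolP; exists i, j.
case Rl : (repair w l); first by exists l; split=> //; apply: pvars_clause_leaf.
move/negbT: Rl; rewrite ffunE Ll negb_or negbK => /andP[_ /asboolP free].
have [u [pu ul wu]] := free i j c; exists u; split=> //.
by rewrite repair_nonleaf // (pvars_not_clause_leaf HH c pu ul).
Qed.

Lemma Fix_lits_of w v : (v \in Fix H (lits_of w)) = w v && ~~ leaf_free w v.
Proof.
rewrite inE; apply/asboolP/andP.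
  case=> i [j [c [wv hall]]]; rewrite in_lits_of in wv; split; first by move/eqP: wv.
  apply/asboolPn=> free; have [u [pu uv wu]] := free i j c.
  by move: (hall u pu uv); rewrite in_lits_of wu.
case=> wv /leaf_freePn[i [j [c nX]]]; exists i, j; split=> //.
split; first by rewrite in_lits_of wv.
move=> u pu uv; rewrite in_lits_of; apply/eqP/negbTE/negP => wu.
by apply: nX; exists u.
Qed.

Lemma Fix_clause_leaf w v : v \in Fix H (lits_of w) -> clause_leaf H v.
Proof. by rewrite Fix_lits_of => /andP[_ /not_leaf_free_clause_leaf]. Qed.

Lemma repair_eq_at w w' v : SAT H (lits_of w) ->
  (forall u, ~~ clause_leaf H u -> w' u = w u) ->
  (repair w' v == w v) = (v \in Fix H (lits_of w)) || (w' v == w v).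
Proof.
move=> Sw eq_nl; rewrite ffunE (eq_leaf_free _ eq_nl) Fix_lits_of.
have [Lv|nLv] := boolP (clause_leaf H v); last first.
  by rewrite eq_nl // (contraNT (@not_leaf_free_clause_leaf w v) nLv) andbF.
have [free|nfree] := boolP (leaf_free w v); first by rewrite orbF andbF.
by rewrite (SAT_not_leaf_free Sw nfree) orbT.
Qed.

Lemma repair_eq w w' : SAT H (lits_of w) ->
  (repair w' == w) = [forall v, (v \notin Fix H (lits_of w)) ==> (w' v == w v)].
Proof.
move=> Sw; apply/eqP/forallP => [E v | agree].
  have eq_nl u : ~~ clause_leaf H u -> w' u = w u by move=> nu; rewrite -E repair_nonleaf.
  by apply/implyP=> nF; move: (repair_eq_at v Sw eq_nl); rewrite E eqxx (negbTE nF).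
have eq_nl u : ~~ clause_leaf H u -> w' u = w u.
  by move=> nu; apply/eqP/(implyP (agree u)); apply: contra nu; apply: Fix_clause_leaf.
apply/ffunP=> v; apply/eqP; rewrite repair_eq_at //.
by case: (boolP (v \in _)) => //= /(implyP (agree v)).
Qed.

Lemma card_repair_fibre w : SAT H (lits_of w) ->
  #|[set w' | repair w' == w]| = 2 ^ #|Fix H (lits_of w)|.
Proof.
move=> Sw; rewrite -(card_ffun_agree_off _ w).
by apply: eq_card => w'; rewrite !inE repair_eq.
Qed.

Lemma guarded_sub_repair S w1 w2 : guarded H S -> {in lvars S, w1 =1 w2} ->
  S \subset lits_of (repair w1) -> S \subset lits_of (repair w2).
Proof.
move=> gS w12 /subsetP S1; apply/subsetP=> -[v b] vbS.
have w12S u c : (u, c) \in S -> w1 u = w2 u.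
  by move=> uS; apply: w12; case: c uS => uS; rewrite inE uS ?orbT.
have repair1 u c : (u, c) \in S -> repair w1 u = c.
  by move/S1; rewrite in_lits_of => /eqP.
have w1_nonleaf u c : (u, c) \in S -> ~~ clause_leaf H u -> w1 u = c.
  by move=> uS nu; rewrite -(repair_nonleaf w1 nu) (repair1 _ _ uS).
have sat12 i j : clause_at i j v -> nonleaf_sat w1 i j v <-> nonleaf_sat w2 i j v.
  move=> c; case: (gS i j v c) => [[]|[[u [pu uv uS]]|[_ neg]]].
  - by case: b vbS; [left|right].
  - have w1u := w1_nonleaf _ _ uS (pvars_not_clause_leaf HH c pu uv).
    by split=> _; exists u; split; rewrite // -(w12S _ _ uS).
  - split=> -[u [pu uv wu]]; have uS := neg u pu uv;
      have w1u := w1_nonleaf _ _ uS (pvars_not_clause_leaf HH c pu uv).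
    + by rewrite w1u in wu.
    + by rewrite -(w12S _ _ uS) w1u in wu.
have free12 : leaf_free w2 v = leaf_free w1 v.
  by apply: asbool_equiv_eq; split=> K i j c; apply/(sat12 i j c); apply: K.
by rewrite in_lits_of -(repair1 _ _ vbS) !ffunE (w12S _ _ vbS) free12.
Qed.

Lemma EC_repair S w : EC H S (lits_of (repair w)) <-> S \subset lits_of (repair w).
Proof. by split=> [[]//|]; split=> //; apply: SAT_repair. Qed.

Lemma guarded_event_depends (D : {set V}) (SS : {set {set lit V}}) :
  (forall S, S \in SS -> guarded H S /\ lvars S = D) ->
  depends_on (fun w => `[< exists2 S, S \in SS & EC H S (lits_of (repair w)) >]) D.
Proof.
move=> SS_D w1 w2 w12; apply: asbool_equiv_eq.
suff transfer (u1 u2 : {ffun V -> bool}) : {in D, u1 =1 u2} ->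
    (exists2 S, S \in SS & EC H S (lits_of (repair u1))) ->
    (exists2 S, S \in SS & EC H S (lits_of (repair u2))).
  by split; apply: transfer => // v vD; rewrite w12.
move=> u12 [S SSS /EC_repair Ssub]; exists S => //; apply/EC_repair.
have [gS lS] := SS_D S SSS; apply: guarded_sub_repair gS _ Ssub.
by rewrite lS.
Qed.

Variable R : realFieldType.
Local Open Scope ring_scope.

Lemma prob_lits_of w :
  prob H R (lits_of w) = (2^-1) ^+ #|V| * (2 ^ #|Fix H (lits_of w)|)%:R.
Proof.
rewrite /prob; have -> : [set v | v \notin Fix H (lits_of w)] = ~: Fix H (lits_of w).
  by apply/setP=> v; rewrite !inE.
rewrite -(cardsC (Fix H (lits_of w))) exprD natrX mulrAC -exprMn.
by rewrite mulVf ?expr1n ?mul1r ?pnatr_eq0.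
Qed.

Lemma Pr_uniform (E : {set lit V} -> Prop) :
  Pr H R E = uniform_mean (fun w => (`[< E (lits_of (repair w)) >])%:R).
Proof.
rewrite /Pr /uniform_mean (reindex_onto lits_of ffun_of_lits); last first.
  by move=> S /asboolP[SS _]; apply: ffun_of_litsK.
under eq_bigl => w do rewrite lits_ofK eqxx andbT.
under eq_bigr => w /asboolP[Sw _] do rewrite prob_lits_of -(card_repair_fibre Sw).
rewrite -mulr_sumr -!natr_sum; congr (_ * _%:R).
transitivity (\sum_(w | `[< E (lits_of (repair w)) >]) 1)%N; last first.
  by rewrite big_mkcond; apply: eq_bigr => w _; case: asboolP.
pose sat_E j := `[< SAT H (lits_of j) /\ E (lits_of j) >].
rewrite [RHS](partition_big repair sat_E) /=.
  apply: eq_bigr => j /asboolP[_ Ej]; rewrite -sum1_card; apply: eq_bigl => w.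
  by rewrite inE; case: eqP => [->|_]; rewrite ?andbT ?andbF //; apply/esym/asboolP.
by move=> w /asboolP Ew; apply/asboolP; split=> //; apply: SAT_repair.
Qed.

End Repair.

Local Open Scope ring_scope.

Theorem lemma18 (R : realFieldType) (V : finType) (H : treeData V)
  (HH : is_btbg H) (q : nat) (Vs : 'I_q -> {set V})
  (Ss : 'I_q -> {set {set lit V}}) :
  (forall i k, i != k -> [disjoint Vs i & Vs k]) ->
  (forall i S, S \in Ss i -> [/\ consistent S, guarded H S & lvars S = Vs i]) ->
  Pr H R (fun S' => forall i, exists2 S, S \in Ss i & EC H S S') =
  \prod_(i < q) Pr H R (fun S' => exists2 S, S \in Ss i & EC H S S').
Proof.
move=> Vs_dis Ss_guarded.
pose event i w := `[< exists2 S, S \in Ss i & EC H S (lits_of (repair H w)) >].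
have event_depends i : depends_on (fun w => (event i w)%:R : R) (Vs i).
  have /guarded_event_depends dep : forall S, S \in Ss i -> guarded H S /\ lvars S = Vs i.
    by move=> S /Ss_guarded[].
  by move=> w1 w2 w12; rewrite /event (dep HH w1 w2 w12).
rewrite Pr_uniform //; under eq_bigr do rewrite Pr_uniform //.
rewrite -(uniform_mean_prod Vs_dis event_depends); congr uniform_mean.
apply/funext=> w; rewrite prod_nat_bool; congr (nat_of_bool _)%:R.
apply/idP/idP=> [/asboolP all_i|/forallP all_i].
  by apply/forallP=> i; apply/asboolP.
by apply/asboolP=> i; apply/asboolP/all_i.
Qed.
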